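(* For $\lambda>1$ let $\mu:=\sqrt{1-\lambda^{-2}}$ and define on $(-1,\mu^{-1}-1)$ $$\gamma_\lambda(\varepsilon):=\frac{(1+\mu(1+\varepsilon))^{1+\mu(1+\varepsilon)}}{(1-\mu(1+\varepsilon))^{1-\mu(1+\varepsilon)}}\cdot\frac{(1-\mu)^{1-\mu}}{(1+\mu)^{1+\mu}}\left(\frac{\lambda}{e}\right)^{2\mu\varepsilon}.$$ Let $\lambda_0>1$. Then there are constants $c_0,c_1,c_2>0$ depending only on $\lambda_0$ such that for every $\lambda\ge\lambda_0$: (i) for every $\varepsilon$ with $|\varepsilon|\lambda^2\le c_0$ one has $1-c_1\lambda^2\varepsilon^2\le\gamma_\lambda(\varepsilon)\le1-c_2\lambda^2\varepsilon^2$; (ii) $\gamma_\lambda$ is monotone increasing on $(-1,0)$ and monotone decreasing on $(0,\mu^{-1}-1)$; (iii) $0<\gamma_\lambda(\varepsilon)\le1-\frac{c_2}{c_0}\lambda^{-2}$ for all $\varepsilon\in(-1,\mu^{-1}-1)\setminus(-c_0\lambda^{-2},c_0\lambda^{-2})$. *)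

From Stdlib Require Import Reals.
Open Scope R_scope.

Definition mu (lam : R) : R := sqrt (1 - / (lam ^ 2)).

(* gamma_lambda(eps), with x^x written via Rpower (bases are positive on the domain) *)
Definition gamma (lam eps : R) : R :=
  let m := mu lam in
  let a := m * (1 + eps) in
  Rpower (1 + a) (1 + a) / Rpower (1 - a) (1 - a)
  * (Rpower (1 - m) (1 - m) / Rpower (1 + m) (1 + m))
  * Rpower (lam / exp 1) (2 * m * eps).

Definition in_dom (lam eps : R) : Prop := -1 < eps < / mu lam - 1.

From Stdlib Require Import Reals Lra Psatz.
From Coquelicot Require Import Coquelicot.
Open Scope R_scope.

(* Write gamma_lambda = exp F with F(0) = 0.  Since mu^2 lambda^2 = lambda^2 - 1,
   the derivative simplifies to F'(eps) = mu ln (1 - (lambda^2 - 1) eps (2 + eps)),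
   whose argument exceeds 1 exactly for eps in (-2, 0); this gives (ii).  For
   |eps| lambda^2 <= 1/8 the bounds -t/(1-t) <= ln (1 - t) <= -t pin F'(eps)/eps
   between -5 mu^3 lambda^2 and -mu^3 lambda^2 / 2, and comparing F with the
   corresponding parabolas by the mean value theorem gives
   F(eps) ~ -mu^3 lambda^2 eps^2, hence (i) with c0 = 1/8.  Monotonicity reduces
   (iii) to (i) at eps = +-c0 / lambda^2, and mu >= mu lambda0 makes the
   constants uniform. *)

Lemma mu_sqr lam : 1 < lam -> mu lam ^ 2 = 1 - / lam ^ 2.
Proof.
  intros Hlam.
  assert (/ lam ^ 2 < 1) by (rewrite <- Rinv_1; apply Rinv_lt_contravar; nra).
  unfold mu. rewrite <- Rsqr_pow2, Rsqr_sqrt; lra.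
Qed.

Lemma mu_bounds lam : 1 < lam -> 0 < mu lam < 1.
Proof.
  intros Hlam. pose proof (mu_sqr lam Hlam) as Hsqr.
  assert (0 < / lam ^ 2 < 1).
  { split; [apply Rinv_0_lt_compat; nra|].
    rewrite <- Rinv_1; apply Rinv_lt_contravar; nra. }
  assert (0 <= mu lam) by apply sqrt_pos.
  split; nra.
Qed.

Lemma mu_le_mu lam0 lam : 1 < lam0 -> lam0 <= lam -> mu lam0 <= mu lam.
Proof.
  intros Hlam0 Hle. unfold mu. apply sqrt_le_1_alt.
  assert (/ lam ^ 2 <= / lam0 ^ 2) by (apply Rinv_le_contravar; nra).
  lra.
Qed.

Lemma sqr_sub1_mu lam : 1 < lam -> lam ^ 2 - 1 = mu lam ^ 2 * lam ^ 2.
Proof. intros Hlam. rewrite (mu_sqr lam Hlam). field. lra. Qed.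

Lemma in_dom_upper_pos lam : 1 < lam -> 0 < / mu lam - 1.
Proof.
  intros Hlam. pose proof (mu_bounds lam Hlam).
  assert (1 < / mu lam) by (rewrite <- Rinv_1; apply Rinv_lt_contravar; lra).
  lra.
Qed.

Lemma in_dom_mu lam eps : 1 < lam -> in_dom lam eps -> -1 < mu lam * (1 + eps) < 1.
Proof.
  intros Hlam [Hlo Hhi]. pose proof (mu_bounds lam Hlam).
  split; [nra|].
  apply (Rmult_lt_compat_l (mu lam)) in Hhi; [|lra].
  rewrite Rmult_minus_distr_l, Rinv_r in Hhi; lra.
Qed.

Lemma ln_le_sub1 y : 0 < y -> ln y <= y - 1.
Proof.
  intros Hy. pose proof (exp_ineq1_le (ln y)) as Hexp.
  rewrite exp_ln in Hexp; lra.
Qed.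

Lemma ln_one_minus_bounds t : t < 1 -> - t / (1 - t) <= ln (1 - t) <= - t.
Proof.
  intros Ht. split.
  - pose proof (ln_le_sub1 (/ (1 - t)) ltac:(apply Rinv_0_lt_compat; lra)) as Hinv.
    rewrite ln_Rinv in Hinv by lra.
    replace (/ (1 - t) - 1) with (t / (1 - t)) in Hinv by (field; lra).
    unfold Rdiv in *. lra.
  - pose proof (ln_le_sub1 (1 - t) ltac:(lra)). lra.
Qed.

Lemma exp_le_chord x : -1 <= x <= 0 -> exp x <= 1 + x / 2.
Proof.
  intros Hx. pose proof (exp_ineq1_le (- x)) as Hneg.
  assert (Hprod : exp x * exp (- x) = 1) by (rewrite <- exp_plus, Rplus_opp_r; apply exp_0).
  pose proof (exp_pos x). nra.
Qed.

Definition log_gamma (lam eps : R) : R :=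
  let m := mu lam in
  let a := m * (1 + eps) in
  (1 + a) * ln (1 + a) - (1 - a) * ln (1 - a)
  - ((1 + m) * ln (1 + m) - (1 - m) * ln (1 - m))
  + 2 * m * eps * (ln lam - 1).

Lemma gamma_exp_log_gamma lam eps : 0 < lam -> gamma lam eps = exp (log_gamma lam eps).
Proof.
  intros Hlam. unfold gamma, log_gamma, Rpower.
  rewrite ln_div, ln_exp by (try lra; apply exp_pos).
  unfold Rdiv. rewrite <- !exp_Ropp, <- !exp_plus. f_equal. ring.
Qed.

Lemma log_gamma_0 lam : log_gamma lam 0 = 0.
Proof. unfold log_gamma. rewrite Rplus_0_r, Rmult_1_r. ring. Qed.

Definition dlog_gamma (lam c : R) : R :=
  mu lam * ln (1 - (lam ^ 2 - 1) * c * (2 + c)).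

Lemma dlog_gamma_arg lam c : 1 < lam ->
  1 - (lam ^ 2 - 1) * c * (2 + c)
  = lam ^ 2 * ((1 + mu lam * (1 + c)) * (1 - mu lam * (1 + c))).
Proof.
  intros Hlam. transitivity (lam ^ 2 - (lam ^ 2 - 1) * (1 + c) ^ 2); [ring|].
  rewrite (sqr_sub1_mu lam Hlam). ring.
Qed.

Lemma is_derive_log_gamma lam c : 1 < lam -> -1 < mu lam * (1 + c) < 1 ->
  is_derive (log_gamma lam) c (dlog_gamma lam c).
Proof.
  intros Hlam Ha. unfold log_gamma, dlog_gamma.
  auto_derive; [repeat split; lra|].
  rewrite dlog_gamma_arg, !ln_mult, ln_pow by (auto; nra).
  replace (1 + - (mu lam * (1 + c))) with (1 - mu lam * (1 + c)) by ring.
  replace (INR 2) with 2 by (simpl; lra).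
  field. split; lra.
Qed.

Lemma dlog_gamma_pos lam c : 1 < lam -> -1 < c < 0 -> 0 < dlog_gamma lam c.
Proof.
  intros Hlam Hc. pose proof (mu_bounds lam Hlam).
  assert (0 < lam ^ 2 - 1) by nra.
  assert (c * (2 + c) < 0) by nra.
  unfold dlog_gamma. apply Rmult_lt_0_compat; [lra|].
  rewrite <- ln_1. apply ln_increasing; nra.
Qed.

Lemma dlog_gamma_neg lam c : 1 < lam -> 0 < c -> -1 < mu lam * (1 + c) < 1 ->
  dlog_gamma lam c < 0.
Proof.
  intros Hlam Hc Ha. pose proof (mu_bounds lam Hlam).
  assert (Harg : 0 < 1 - (lam ^ 2 - 1) * c * (2 + c)).
  { rewrite (dlog_gamma_arg lam c Hlam).
    apply Rmult_lt_0_compat; [nra|apply Rmult_lt_0_compat; lra]. }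
  unfold dlog_gamma. rewrite <- (Rmult_0_r (mu lam)).
  apply Rmult_lt_compat_l; [lra|].
  assert (0 < lam ^ 2 - 1) by nra.
  assert (0 < c * (2 + c)) by nra.
  rewrite <- ln_1. apply ln_increasing; nra.
Qed.

Lemma gamma_increasing lam e1 e2 : 1 < lam -> -1 < e1 -> e1 < e2 -> e2 < 0 ->
  gamma lam e1 < gamma lam e2.
Proof.
  intros Hlam H1 H12 H2. pose proof (mu_bounds lam Hlam).
  rewrite !gamma_exp_log_gamma by lra. apply exp_increasing.
  apply (incr_function (log_gamma lam) (-1) 0 (dlog_gamma lam)); simpl; auto.
  - intros c Hlo Hhi. apply is_derive_log_gamma; nra.
  - intros c Hlo Hhi. apply dlog_gamma_pos; lra.
Qed.

Lemma gamma_decreasing lam e1 e2 : 1 < lam -> 0 < e1 -> e1 < e2 -> e2 < / mu lam - 1 ->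
  gamma lam e2 < gamma lam e1.
Proof.
  intros Hlam H1 H12 H2.
  rewrite !gamma_exp_log_gamma by lra. apply exp_increasing, Ropp_lt_cancel.
  apply (incr_function (fun s => - log_gamma lam s) 0 (/ mu lam - 1)
           (fun s => - dlog_gamma lam s)); simpl; auto.
  - intros c Hlo Hhi.
    exact (is_derive_opp _ _ _ (is_derive_log_gamma lam c Hlam
             (in_dom_mu lam c Hlam ltac:(split; lra)))).
  - intros c Hlo Hhi. apply Ropp_0_gt_lt_contravar, dlog_gamma_neg; auto.
    apply in_dom_mu; [exact Hlam|split; simpl in *; lra].
Qed.

Lemma quadratic_lower_bound_of_slope (f f' : R -> R) (k e : R) :
  (forall c, Rmin 0 e <= c <= Rmax 0 e -> is_derive f c (f' c)) ->
  (forall c, Rmin 0 e < c < Rmax 0 e -> k * c ^ 2 <= f' c * c) ->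
  f 0 + k / 2 * e ^ 2 <= f e.
Proof.
  intros Hderiv Hslope.
  set (g := fun s => f s - k / 2 * s ^ 2).
  assert (Hg : forall c, Rmin 0 e <= c <= Rmax 0 e -> derivable_pt_lim g c (f' c - k * c)).
  { intros c Hc. apply is_derive_Reals. unfold g.
    apply (is_derive_minus f (fun s => k / 2 * s ^ 2)); [now apply Hderiv|].
    auto_derive; [easy|]. simpl. field. }
  destruct (Rtotal_order 0 e) as [Hpos|[Hzero|Hneg]].
  - rewrite Rmin_left, Rmax_right in * by lra.
    destruct (MVT_cor2 g _ 0 e Hpos Hg) as [c [Hmvt Hc]].
    specialize (Hslope c Hc). unfold g in Hmvt.
    assert (0 <= f' c - k * c) by nra. nra.
  - subst e. lra.
  - rewrite Rmin_right, Rmax_left in * by lra.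
    destruct (MVT_cor2 g _ e 0 Hneg Hg) as [c [Hmvt Hc]].
    specialize (Hslope c Hc). unfold g in Hmvt.
    assert (f' c - k * c <= 0) by nra. nra.
Qed.

Lemma quadratic_upper_bound_of_slope (f f' : R -> R) (k e : R) :
  (forall c, Rmin 0 e <= c <= Rmax 0 e -> is_derive f c (f' c)) ->
  (forall c, Rmin 0 e < c < Rmax 0 e -> f' c * c <= k * c ^ 2) ->
  f e <= f 0 + k / 2 * e ^ 2.
Proof.
  intros Hderiv Hslope.
  pose proof (quadratic_lower_bound_of_slope (fun s => - f s) (fun s => - f' s) (- k) e)
    as Hlower.
  assert (- f 0 + - k / 2 * e ^ 2 <= - f e); [|lra].
  apply Hlower.
  - intros c Hc. exact (is_derive_opp _ _ _ (Hderiv c Hc)).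
  - intros c Hc. specialize (Hslope c Hc). lra.
Qed.

Lemma dlog_gamma_slope lam c : 1 < lam -> Rabs c * lam ^ 2 <= 1 / 8 ->
  -5 * (mu lam ^ 3 * lam ^ 2) * c ^ 2 <= dlog_gamma lam c * c
  <= -1 / 2 * (mu lam ^ 3 * lam ^ 2) * c ^ 2.
Proof.
  intros Hlam Hc. pose proof (mu_bounds lam Hlam) as Hmu.
  set (K := lam ^ 2 - 1).
  assert (HK : 0 < K) by (unfold K; nra).
  assert (HmK : mu lam ^ 3 * lam ^ 2 = mu lam * K)
    by (unfold K; rewrite (sqr_sub1_mu lam Hlam); ring).
  assert (HKc : K * Rabs c <= 1 / 8) by (unfold K; pose proof (Rabs_pos c); nra).
  assert (Habs : Rabs c <= 1 / 8) by (pose proof (Rabs_pos c); nra).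
  set (t := K * c * (2 + c)).
  assert (Hs : 0 <= K * c ^ 2) by nra.
  assert (Htc_eq : t * c = K * c ^ 2 * (2 + c)) by (unfold t; ring).
  assert (Ht : t < 1) by (unfold t; revert HKc Habs; unfold Rabs;
                          destruct (Rcase_abs c); intros; nra).
  destruct (ln_one_minus_bounds t Ht) as [Hlo Hhi].
  set (u := ln (1 - t)) in *.
  assert (Hlo' : - t <= u * (1 - t)).
  { apply (Rmult_le_compat_r (1 - t)) in Hlo; [|lra].
    unfold Rdiv in Hlo. rewrite Rmult_assoc, Rinv_l, Rmult_1_r in Hlo by lra. lra. }
  assert (Hu : -5 * K * c ^ 2 <= u * c <= -1 / 2 * K * c ^ 2).
  { destruct (Rle_or_lt 0 c) as [Hpos|Hneg].
    - rewrite Rabs_right in HKc, Habs by lra.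
      assert (Htpos : 0 <= t <= 1 / 2) by (unfold t; split; nra).
      assert (Hu2 : -2 * t <= u) by nra.
      assert (Htc : 2 * (K * c ^ 2) <= t * c <= 17 / 8 * (K * c ^ 2))
        by (rewrite Htc_eq; split; nra).
      split; nra.
    - rewrite Rabs_left in HKc, Habs by lra.
      assert (Htneg : - 1 / 4 <= t <= 0) by (unfold t; split; nra).
      assert (Hu45 : - 4 / 5 * t <= u).
      { assert (t * (1 + 4 * t) <= 0) by nra.
        apply Rnot_lt_le. intros Hlt.
        assert ((u + 4 / 5 * t) * (1 - t) < 0) by (apply Rmult_neg_pos; lra).
        nra. }
      assert (Htc : 15 / 8 * (K * c ^ 2) <= t * c <= 2 * (K * c ^ 2))
        by (rewrite Htc_eq; split; nra).
      split; nra. }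
  unfold dlog_gamma. fold K t u. rewrite HmK. split; nra.
Qed.

Lemma log_gamma_quadratic_bounds lam e : 1 < lam -> in_dom lam e ->
  Rabs e * lam ^ 2 <= 1 / 8 ->
  -5 / 2 * (mu lam ^ 3 * lam ^ 2) * e ^ 2 <= log_gamma lam e
  <= -1 / 4 * (mu lam ^ 3 * lam ^ 2) * e ^ 2.
Proof.
  intros Hlam [Hlo Hhi] He. pose proof (in_dom_upper_pos lam Hlam).
  assert (Hseg : forall c, Rmin 0 e <= c <= Rmax 0 e -> in_dom lam c /\ Rabs c <= Rabs e).
  { intros c. unfold Rmin, Rmax, in_dom, Rabs.
    destruct (Rle_dec 0 e), (Rcase_abs c), (Rcase_abs e); intros; lra. }
  assert (Hderiv : forall c, Rmin 0 e <= c <= Rmax 0 e ->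
                             is_derive (log_gamma lam) c (dlog_gamma lam c)).
  { intros c Hc. apply is_derive_log_gamma, in_dom_mu; [exact Hlam..|apply Hseg, Hc]. }
  assert (Hslope : forall c, Rmin 0 e < c < Rmax 0 e ->
    -5 * (mu lam ^ 3 * lam ^ 2) * c ^ 2 <= dlog_gamma lam c * c
    <= -1 / 2 * (mu lam ^ 3 * lam ^ 2) * c ^ 2).
  { intros c Hc. apply dlog_gamma_slope; [exact Hlam|].
    destruct (Hseg c ltac:(lra)) as [_ Hce]. pose proof (pow2_ge_0 lam). nra. }
  pose proof (quadratic_lower_bound_of_slope _ _ _ e Hderiv
                (fun c Hc => proj1 (Hslope c Hc))).
  pose proof (quadratic_upper_bound_of_slope _ _ _ e Hderiv
                (fun c Hc => proj2 (Hslope c Hc))).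
  rewrite log_gamma_0 in *. lra.
Qed.

Lemma gamma_quadratic_bounds lam e : 1 < lam -> in_dom lam e ->
  Rabs e * lam ^ 2 <= 1 / 8 ->
  1 - 5 / 2 * lam ^ 2 * e ^ 2 <= gamma lam e <= 1 - mu lam ^ 3 / 8 * lam ^ 2 * e ^ 2.
Proof.
  intros Hlam Hdom He. pose proof (mu_bounds lam Hlam).
  destruct (log_gamma_quadratic_bounds lam e Hlam Hdom He) as [Hlo Hhi].
  rewrite gamma_exp_log_gamma by lra.
  set (x := lam ^ 2 * e ^ 2) in *.
  assert (Hx : 0 <= x <= 1 / 64).
  { assert (Hsq : (Rabs e * lam ^ 2) ^ 2 = x * lam ^ 2)
      by (rewrite Rpow_mult_distr, pow2_abs; unfold x; ring).
    assert (0 <= x) by (unfold x; nra).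
    assert (1 <= lam ^ 2) by nra.
    assert (0 <= Rabs e * lam ^ 2) by (pose proof (Rabs_pos e); nra).
    assert ((Rabs e * lam ^ 2) ^ 2 <= 1 / 64) by nra.
    split; nra. }
  assert (Hm3 : 0 < mu lam ^ 3 <= 1)
    by (split; [apply pow_lt | rewrite <- (pow1 3); apply pow_incr]; lra).
  replace (-5 / 2 * (mu lam ^ 3 * lam ^ 2) * e ^ 2) with (-5 / 2 * (mu lam ^ 3 * x))
    in Hlo by (unfold x; ring).
  replace (-1 / 4 * (mu lam ^ 3 * lam ^ 2) * e ^ 2) with (-1 / 4 * (mu lam ^ 3 * x))
    in Hhi by (unfold x; ring).
  replace (mu lam ^ 3 / 8 * lam ^ 2 * e ^ 2) with (mu lam ^ 3 * x / 8) by (unfold x; field).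
  replace (5 / 2 * lam ^ 2 * e ^ 2) with (5 / 2 * x) by (unfold x; ring).
  assert (0 <= mu lam ^ 3 * x <= x) by (split; nra).
  split.
  - pose proof (exp_ineq1_le (log_gamma lam e)). lra.
  - pose proof (exp_le_chord (log_gamma lam e) ltac:(split; lra)). lra.
Qed.

Lemma gamma_far_bound lam e : 1 < lam -> in_dom lam e -> 1 / 8 * / lam ^ 2 <= Rabs e ->
  gamma lam e <= 1 - mu lam ^ 3 / 512 * / lam ^ 2.
Proof.
  intros Hlam [Hlo Hhi] He. pose proof (in_dom_upper_pos lam Hlam).
  set (e0 := 1 / 8 * / lam ^ 2) in *.
  assert (Hinv : 0 < / lam ^ 2 < 1).
  { split; [apply Rinv_0_lt_compat; nra|].
    rewrite <- Rinv_1; apply Rinv_lt_contravar; nra. }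
  assert (He0 : 0 < e0 < 1) by (unfold e0; lra).
  assert (Hthreshold : forall s, Rabs s = e0 -> in_dom lam s ->
            gamma lam s <= 1 - mu lam ^ 3 / 512 * / lam ^ 2).
  { intros s Hs Hdom.
    destruct (gamma_quadratic_bounds lam s Hlam Hdom) as [_ Hup].
    { rewrite Hs. unfold e0. right. field. lra. }
    assert (Hs2 : s ^ 2 = e0 ^ 2) by (rewrite <- pow2_abs, Hs; reflexivity).
    rewrite Hs2 in Hup. unfold e0 in Hup.
    replace (mu lam ^ 3 / 512 * / lam ^ 2)
      with (mu lam ^ 3 / 8 * lam ^ 2 * (1 / 8 * / lam ^ 2) ^ 2) by (field; lra).
    exact Hup. }
  destruct (Rle_or_lt 0 e) as [Hpos|Hneg].
  - rewrite Rabs_right in He by lra.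
    destruct (Req_dec e e0) as [->|Hne].
    + apply Hthreshold; [apply Rabs_right|split]; lra.
    + apply Rle_trans with (gamma lam e0).
      * left. apply gamma_decreasing; lra.
      * apply Hthreshold; [apply Rabs_right|split]; lra.
  - rewrite Rabs_left in He by lra.
    destruct (Req_dec e (- e0)) as [->|Hne].
    + apply Hthreshold; [rewrite Rabs_Ropp; apply Rabs_right|split]; lra.
    + apply Rle_trans with (gamma lam (- e0)).
      * left. apply gamma_increasing; lra.
      * apply Hthreshold; [rewrite Rabs_Ropp; apply Rabs_right|split]; lra.
Qed.

Theorem lemmaA3 (lam0 : R) (Hlam0 : 1 < lam0) :
  exists c0 c1 c2 : R, 0 < c0 /\ 0 < c1 /\ 0 < c2 /\
  forall lam : R, lam0 <= lam ->
    (* (i) *)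
    (forall eps : R, in_dom lam eps -> Rabs eps * lam ^ 2 <= c0 ->
       1 - c1 * lam ^ 2 * eps ^ 2 <= gamma lam eps /\
       gamma lam eps <= 1 - c2 * lam ^ 2 * eps ^ 2) /\
    (* (ii) *)
    (forall e1 e2 : R, -1 < e1 -> e1 < e2 -> e2 < 0 ->
       gamma lam e1 < gamma lam e2) /\
    (forall e1 e2 : R, 0 < e1 -> e1 < e2 -> e2 < / mu lam - 1 ->
       gamma lam e2 < gamma lam e1) /\
    (* (iii) *)
    (forall eps : R, in_dom lam eps -> c0 * / lam ^ 2 <= Rabs eps ->
       0 < gamma lam eps /\ gamma lam eps <= 1 - c2 / c0 * / lam ^ 2).
Proof.
  pose proof (mu_bounds lam0 Hlam0) as Hmu0.
  assert (Hm0 : 0 < mu lam0 ^ 3) by (apply pow_lt; lra).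
  exists (1 / 8), (5 / 2), (mu lam0 ^ 3 / 4096).
  do 3 (split; [lra|]).
  intros lam Hle. assert (Hlam : 1 < lam) by lra.
  assert (Hm : mu lam0 ^ 3 <= mu lam ^ 3)
    by (apply pow_incr; pose proof (mu_le_mu lam0 lam Hlam0 Hle); lra).
  split; [|split; [|split]].
  - intros eps Hdom Heps.
    destruct (gamma_quadratic_bounds lam eps Hlam Hdom Heps) as [Hlow Hup].
    assert (0 <= lam ^ 2 * eps ^ 2) by nra.
    split; nra.
  - intros e1 e2. apply gamma_increasing; exact Hlam.
  - intros e1 e2. apply gamma_decreasing; exact Hlam.
  - intros eps Hdom Heps. split.
    { rewrite gamma_exp_log_gamma by lra. apply exp_pos. }
    pose proof (gamma_far_bound lam eps Hlam Hdom Heps).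
    assert (0 < / lam ^ 2) by (apply Rinv_0_lt_compat; nra).
    replace (mu lam0 ^ 3 / 4096 / (1 / 8)) with (mu lam0 ^ 3 / 512) by field.
    nra.
Qed.
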